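(* Let $\mathbb{G}$ be a linear array whose difference coarray is hole-free, and let $\mathbb{F}_r$ be the fractal array generated by $\mathbb{G}$. Denote by $F_{\mathbb{G}}$ and $F_r$ the fragilities of $\mathbb{G}$ and $\mathbb{F}_r$. Then $F_r\le F_{\mathbb{G}}$ for all $r\ge1$.
   Context: A linear array is a finite set $\mathbb{G}\subset\mathbb{Z}$ with $\min\mathbb{G}=0$; its difference coarray is $\mathbb{D}=\{n_1-n_2:n_1,n_2\in\mathbb{G}\}$; its central ULA $\mathbb{U}$ is the largest set $\{-m,\dots,m\}$ contained in $\mathbb{D}$; $\mathbb{D}$ is hole-free if $\mathbb{D}=\mathbb{U}$. The fractal array generated by $\mathbb{G}$ (with $M=|\mathbb{U}|$) is $\mathbb{F}_0=\{0\}$, $\mathbb{F}_{r+1}=\bigcup_{n\in\mathbb{G}}(\mathbb{F}_r+nM^r)$ where $A+t=\{a+t:a\in A\}$. For an array $\mathbb{A}$ with difference coarray $\mathbb{D}_{\mathbb{A}}$, a sensor $n\in\mathbb{A}$ is essential if the difference coarray of $\mathbb{A}\setminus\{n\}$ differs from $\mathbb{D}_{\mathbb{A}}$. The fragility of $\mathbb{A}$ is $F_{\mathbb{A}}=|\mathbb{E}|/|\mathbb{A}|$ where $\mathbb{E}$ is the set of essential sensors of $\mathbb{A}$. *)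

(* Arrays are finite sets of integers, represented by
   sequences of [int] (duplicates irrelevant; cardinality = size of undup). *)
From HB Require Import structures.
From mathcomp Require Import all_boot all_order all_algebra.
Set Implicit Arguments. Unset Strict Implicit. Unset Printing Implicit Defensive.
Import Order.TTheory GRing.Theory Num.Theory.
Local Open Scope ring_scope.

Definition seteq (A B : seq int) : bool := all (mem B) A && all (mem A) B.

Definition linear_array (G : seq int) : bool :=
  (0 \in G) && all (fun n => 0 <= n) G.

Definition coarray (A : seq int) : seq int := [seq a - b | a <- A, b <- A].

Definition ULA (m : nat) : seq int := [seq i%:Z - m%:Z | i <- iota 0 (2 * m).+1].

(* half-width m of the central ULA of A: largest m with {-m..m} contained in D
   (candidates m <= size D suffice since {-m..m} has 2m+1 distinct elements) *)
Definition ula_m (A : seq int) : nat :=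
  (\max_(k <- iota 0 (size (coarray A)).+1 | all (mem (coarray A)) (ULA k)) k)%N.

Definition central_ULA (A : seq int) : seq int := ULA (ula_m A).
Definition ula_size (A : seq int) : nat := size (undup (central_ULA A)).

Definition hole_free (A : seq int) : bool := seteq (coarray A) (central_ULA A).

Fixpoint fractal (G : seq int) (r : nat) : seq int :=
  match r with
  | 0%N => [:: 0]
  | r'.+1 => flatten [seq [seq a + n * ((ula_size G) ^ r')%N%:Z | a <- fractal G r'] | n <- G]
  end.

Definition essential (A : seq int) (n : int) : bool :=
  (n \in A) && ~~ seteq (coarray [seq x <- A | x != n]) (coarray A).

Definition essential_set (A : seq int) : seq int :=
  [seq n <- undup A | essential A n].

Definition fragility (A : seq int) : rat :=
  (size (essential_set A))%:R / (size (undup A))%:R.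

From HB Require Import structures.
From mathcomp Require Import all_boot all_order all_algebra.
From mathcomp Require Import zify.
Set Implicit Arguments. Unset Strict Implicit. Unset Printing Implicit Defensive.
Import Order.TTheory GRing.Theory Num.Theory.
Local Open Scope ring_scope.

(* Since hole-freeness puts G inside [0, M), every F_r lies in [0, M^r), so
   F_{r+1} is a disjoint union of |G| translated copies of F_r and each of its
   sensors has a unique "digit" n in G.  A sensor whose digit is inessential in
   G is inessential in F_{r+1}: any difference using the digit n can be rebuilt
   from digits other than n.  Hence |E_{r+1}| <= |E_G| |F_r| while
   |F_{r+1}| = |G| |F_r|. *)

Definition tile (A B : seq int) (N : int) : seq int :=
  [seq a + n * N | n <- B, a <- A].

Lemma fractalS G r : fractal G r.+1 = tile (fractal G r) G ((ula_size G) ^ r)%N%:Z.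
Proof. by []. Qed.

Lemma mem_tile A B N x :
  reflect (exists n a, [/\ n \in B, a \in A & x = a + n * N]) (x \in tile A B N).
Proof.
apply: (iffP allpairsP).
  by case=> [[n a] /= [nB aA ->]]; exists n, a.
by case=> n [a [nB aA ->]]; exists (n, a).
Qed.

Lemma tile_bound A B N K :
  {in A, forall a, 0 <= a < N} -> {in B, forall n, 0 <= n < K} ->
  {in tile A B N, forall x, 0 <= x < N * K}.
Proof.
move=> Abd Bbd x /mem_tile[n [a [nB aA ->]]].
have := Abd a aA; have := Bbd n nB; nia.
Qed.

Lemma digit_inj (N a a' n n' : int) : 0 <= a < N -> 0 <= a' < N ->
  a + n * N = a' + n' * N -> a = a' /\ n = n'.
Proof.
move=> aN a'N E.
have nn' : n = n'.
  have : n + 1 <= n' \/ n' + 1 <= n \/ n = n' by lia.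
  by case=> [le|[le|//]]; exfalso; nia.
by move: E; rewrite nn'; split=> //; lia.
Qed.

Lemma coarray_filter_sub (A : seq int) x :
  all (mem (coarray A)) (coarray [seq y <- A | y != x]).
Proof.
apply/allP => _ /allpairsP[[p q] /= [pIn qIn ->]].
by apply/allpairsP; exists (p, q); rewrite !mem_filter in pIn qIn;
  case/andP: pIn => _ ->; case/andP: qIn.
Qed.

Section Tile.

Variables (A B : seq int) (N : int).
Hypothesis A_digits : {in A, forall a, 0 <= a < N}.

Lemma tile_inj n n' a a' : a \in A -> a' \in A ->
  a + n * N = a' + n' * N -> a = a' /\ n = n'.
Proof. by move=> /A_digits aN /A_digits a'N; apply: digit_inj. Qed.

Lemma size_undup_tile :
  size (undup (tile A B N)) = (size (undup B) * size (undup A))%N.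
Proof.
rewrite -(size_allpairs (fun n a => a + n * N)).
apply/perm_size/uniq_perm; rewrite ?undup_uniq //.
- apply: allpairs_uniq; rewrite ?undup_uniq //.
  move=> [n a] [n' a'] /allpairsP[[? ?] /= [_ aA [-> ->]]].
  move=> /allpairsP[[? ?] /= [_ a'A [-> ->]]] /= E.
  rewrite !mem_undup in aA a'A.
  by have [-> ->] := tile_inj aA a'A E.
- move=> x; rewrite mem_undup; apply/mem_tile/allpairsP.
    by case=> n [a [nB aA ->]]; exists (n, a); rewrite !mem_undup.
  by case=> [[n a] /=]; rewrite !mem_undup => -[nB aA ->]; exists n, a.
Qed.

Lemma coarray_tile_remove n a : a \in A ->
  all (mem (coarray [seq y <- B | y != n])) (coarray B) ->
  all (mem (coarray [seq y <- tile A B N | y != a + n * N])) (coarray (tile A B N)).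
Proof.
move=> aA Bn; apply/allP => _ /allpairsP[[_ _] /= [/mem_tile[g1 [a1 [g1B a1A ->]]]
  /mem_tile[g2 [a2 [g2B a2A ->]]] ->]].
have : g1 - g2 \in coarray B by apply/allpairsP; exists (g1, g2).
move/allP: Bn => Bn /Bn /allpairsP[[h1 h2] /= [h1B h2B Eh]].
rewrite !mem_filter in h1B h2B.
case/andP: h1B => h1n h1B; case/andP: h2B => h2n h2B.
have keep h a' : h != n -> h \in B -> a' \in A ->
    a' + h * N \in [seq y <- tile A B N | y != a + n * N].
  move=> hn hB a'A; rewrite mem_filter; apply/andP; split.
    by apply: contra hn => /eqP /(tile_inj a'A aA) [_ ->].
  by apply/mem_tile; exists h, a'.
apply/allpairsP; exists (a1 + h1 * N, a2 + h2 * N); split; rewrite ?keep //=.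
have : g1 * N - g2 * N = h1 * N - h2 * N by rewrite -!mulrBl Eh.
by move: (g1 * N) (g2 * N) (h1 * N) (h2 * N) => u v w z; lia.
Qed.

Lemma essential_tile n a : a \in A ->
  essential (tile A B N) (a + n * N) -> essential B n.
Proof.
move=> aA /andP[/mem_tile[n' [a' [n'B a'A E]]] notess].
have [_ nn'] := tile_inj aA a'A E; rewrite -nn' in n'B.
rewrite /essential n'B; apply: contra notess => /andP[_ Bn].
by rewrite /seteq coarray_filter_sub coarray_tile_remove.
Qed.

Lemma size_essential_tile :
  (size (essential_set (tile A B N)) <=
    size (essential_set B) * size (undup A))%N.
Proof.
rewrite -(size_allpairs (fun n a => a + n * N)).
apply: uniq_leq_size; first by rewrite filter_uniq ?undup_uniq.
move=> x; rewrite mem_filter => /andP[ess _].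
have /mem_tile[n [a [_ aA Ex]]] := proj1 (andP ess).
have essn : essential B n by apply: (essential_tile aA); rewrite -Ex.
apply/allpairsP; exists (n, a); split; rewrite /= ?mem_undup //.
by rewrite mem_filter mem_undup essn; case/andP: essn.
Qed.

End Tile.

(* For [k = 0] both sides of the scaled ratio degenerate to [0 / 0 = 0]. *)
Lemma ler_ratio_scaled (R : numFieldType) (e e' s s' k : nat) :
  (e <= e' * k)%N -> s = (s' * k)%N -> e%:R / s%:R <= e'%:R / s'%:R :> R.
Proof.
move=> le_e ->.
have [-> | s'0] := posnP s'; first by rewrite mul0n invr0 !mulr0.
have [-> | k0] := posnP k; first by rewrite muln0 invr0 mulr0 divr_ge0.
rewrite natrM ler_pdivrMr ?mulr_gt0 ?ltr0n // mulrA divfK ?pnatr_eq0 -?lt0n //.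
by rewrite -natrM ler_nat.
Qed.

Lemma fragility_tile (A B : seq int) (N : int) :
  {in A, forall a, 0 <= a < N} -> fragility (tile A B N) <= fragility B.
Proof.
move=> A_digits; apply: ler_ratio_scaled (size_essential_tile _ A_digits) _.
exact: size_undup_tile.
Qed.

Lemma hole_free_digits G : linear_array G -> hole_free G ->
  {in G, forall g, 0 <= g < (ula_size G)%:Z}.
Proof.
move=> /andP[G0 /allP G_ge0] /andP[/allP D_ULA _] g gG.
rewrite G_ge0 //=.
have /D_ULA : g - 0 \in coarray G by apply/allpairsP; exists (g, 0).
rewrite /ula_size /central_ULA undup_id; last first.
  by rewrite map_inj_uniq ?iota_uniq // => i j; lia.
by rewrite size_map size_iota => /mapP[i]; rewrite mem_iota; lia.
Qed.

Lemma fractal_digits G r : linear_array G -> hole_free G ->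
  {in fractal G r, forall a, 0 <= a < ((ula_size G) ^ r)%N%:Z}.
Proof.
move=> HG Hh; elim: r => [|r IH] a; first by rewrite inE => /eqP ->.
rewrite fractalS expnS PoszM mulrC.
exact: tile_bound IH (hole_free_digits HG Hh) a.
Qed.

Theorem theorem6 (G : seq int) :
  linear_array G -> hole_free G ->
  forall r : nat, (1 <= r)%N -> fragility (fractal G r) <= fragility G.
Proof.
move=> HG Hh [//|r] _; rewrite fractalS.
exact/fragility_tile/fractal_digits.
Qed.
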